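(* In the UDoG template described in the context, for any $t\ge0$ and any $\rho_t>0$, \[ \bar r_t\alpha_t\langle g_t,x_{t+1}-x^\star\rangle\le\frac{\bar r_t^2\alpha_t^2\rho_t}{2}\|g_t-m_t\|^2-\frac1{2\rho_t}\|x_{t+1}-y_t\|^2+\left(\frac1{2\rho_t}-\frac{\sqrt{\Gamma^x_t}}{2}\right)\left(\|x_{t+1}-y_t\|^2+\|x_{t+1}-y_{t+1}\|^2\right)+\frac{\sqrt{\Gamma^y_t}}{2}\left(\|y_t-x^\star\|^2-\|y_{t+1}-x^\star\|^2\right). \]
   Context: Norms are Euclidean, $\Pi_{\mathcal K}$ is Euclidean projection. $\mathcal K\subseteq\mathbb{R}^n$ closed convex, $f:\mathcal K\to\mathbb R$ convex with minimizer $x^\star$, and $\mathcal O$ a stochastic gradient oracle (any random vectors $m_t,g_t$ below). UDoG template: given $x_0\in\mathcal K$, $r_\epsilon>0$, set $y_0=x_0$; for $t=0,1,\dots$: $\bar r_t=\max_{k\le t}\max\{\|y_k-x_0\|,\|x_k-x_0\|,r_\epsilon\}$, $\alpha_t=\sum_{k=0}^t\bar r_k/\bar r_t$, $w_t=\alpha_t\bar r_t$; $\bar z_t=\frac{w_ty_t+\sum_{k=0}^{t-1}w_kx_{k+1}}{\sum_{k=0}^tw_k}$, $m_t\sim\mathcal O(\bar z_t)$, $x_{t+1}=\Pi_{\mathcal K}(y_t-\alpha_t\eta_{x,t}m_t)$; $\bar x_t=\frac{\sum_{k=0}^tw_kx_{k+1}}{\sum_{k=0}^tw_k}$, $g_t\sim\mathcal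 O(\bar x_t)$, $y_{t+1}=\Pi_{\mathcal K}(y_t-\alpha_t\eta_{y,t}g_t)$. Step sizes $\eta_{x,t}=\bar r_t/\sqrt{\Gamma^x_t}$, $\eta_{y,t}=\bar r_t/\sqrt{\Gamma^y_t}$ with $0<\Gamma^x_0\le\Gamma^y_0\le\Gamma^x_1\le\Gamma^y_1\le\cdots$. *)

From HB Require Import structures.
From mathcomp Require Import all_boot all_order all_algebra.
From mathcomp Require Import all_classical all_reals all_analysis.
Set Implicit Arguments. Unset Strict Implicit. Unset Printing Implicit Defensive.
Import Order.TTheory GRing.Theory Num.Theory.
Import numFieldNormedType.Exports.
Local Open Scope classical_set_scope.
Local Open Scope ring_scope.

Section UDoG.
Variables (R : realType) (n : nat).
Notation vec := 'rV[R]_n.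

Definition dotv (u v : vec) : R := \sum_(i < n) u 0 i * v 0 i.
Definition enorm (u : vec) : R := Num.sqrt (dotv u u).

Definition convex_setK (K : set vec) : Prop :=
  forall u v, K u -> K v -> forall l : R, 0 <= l <= 1 -> K (l *: u + (1 - l) *: v).

Definition convex_fun_on (K : set vec) (f : vec -> R) : Prop :=
  forall u v, K u -> K v -> forall l : R, 0 <= l <= 1 ->
    f (l *: u + (1 - l) *: v) <= l * f u + (1 - l) * f v.

Definition is_proj (K : set vec) (z p : vec) : Prop :=
  K p /\ forall q, K q -> enorm (z - p) <= enorm (z - q).

Definition rbar (x0 : vec) (r_eps : R) (x y : nat -> vec) (t : nat) : R :=
  \big[Num.max/r_eps]_(k < t.+1) Num.max (enorm (y k - x0)) (enorm (x k - x0)).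

Definition alpha (x0 : vec) (r_eps : R) (x y : nat -> vec) (t : nat) : R :=
  (\sum_(k < t.+1) rbar x0 r_eps x y k) / rbar x0 r_eps x y t.

Definition weight (x0 : vec) (r_eps : R) (x y : nat -> vec) (t : nat) : R :=
  alpha x0 r_eps x y t * rbar x0 r_eps x y t.

Definition zbar (x0 : vec) (r_eps : R) (x y : nat -> vec) (t : nat) : vec :=
  (\sum_(k < t.+1) weight x0 r_eps x y k)^-1 *:
    (weight x0 r_eps x y t *: y t + \sum_(k < t) weight x0 r_eps x y k *: x k.+1).

Definition xbar (x0 : vec) (r_eps : R) (x y : nat -> vec) (t : nat) : vec :=
  (\sum_(k < t.+1) weight x0 r_eps x y k)^-1 *:
    (\sum_(k < t.+1) weight x0 r_eps x y k *: x k.+1).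

(* The UDoG template, with arbitrary oracle outputs m t (at zbar t) and g t (at xbar t). *)
Definition udog_run (K : set vec) (x0 : vec) (r_eps : R) (Gx Gy : nat -> R)
    (x y m g : nat -> vec) : Prop :=
  x 0 = x0 /\ y 0 = x0 /\
  forall t,
    is_proj K (y t - (alpha x0 r_eps x y t * (rbar x0 r_eps x y t / Num.sqrt (Gx t))) *: m t)
      (x t.+1) /\
    is_proj K (y t - (alpha x0 r_eps x y t * (rbar x0 r_eps x y t / Num.sqrt (Gy t))) *: g t)
      (y t.+1).

End UDoG.

(* Both iterates are projected gradient steps from y_t, so the obtuse-angle
   criterion for the projection onto a convex set yields a three-point
   inequality for the x-step (compared with y_{t+1}) and for the y-step
   (compared with xstar).  Writing
     <g_t, x_{t+1} - xstar> = <g_t - m_t, x_{t+1} - y_{t+1}>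
                         + <m_t, x_{t+1} - y_{t+1}> + <g_t, y_{t+1} - xstar>,
   the first term is bounded by Young's inequality and the other two by the
   three-point inequalities; what is left over,
   (sqrt Gx_t - sqrt Gy_t)/2 |y_t - y_{t+1}|^2, is nonpositive. *)

From HB Require Import structures.
From mathcomp Require Import all_boot all_order all_algebra.
From mathcomp Require Import all_classical all_reals all_analysis.
From mathcomp Require Import ring lra.
Set Implicit Arguments. Unset Strict Implicit.
Import Order.TTheory GRing.Theory Num.Theory.
Import numFieldNormedType.Exports.
Local Open Scope classical_set_scope.
Local Open Scope ring_scope.

Lemma quadratic_ge0_le0 (R : realFieldType) (a b : R) : 0 <= b ->
  (forall l, 0 < l <= 1 -> 0 <= l ^+ 2 * b - 2 * l * a) -> a <= 0.
Proof.
move=> b_ge0 quad_ge0; rewrite leNgt; apply/negP => a_gt0.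
have ab_gt0 : 0 < a + b by lra.
pose l := a / (a + b).
have l_gt0 : 0 < l by rewrite divr_gt0.
have l_le1 : l <= 1 by rewrite ler_pdivrMr // mul1r; lra.
have lab : l * (a + b) = a by rewrite divfK // gt_eqF.
have := quad_ge0 l; rewrite l_gt0 l_le1 => /(_ isT).
have : l * (l * b - 2 * a) < 0 by rewrite pmulr_rlt0 //; nra.
lra.
Qed.

Section EuclideanGeometry.
Variables (R : realType) (n : nat).
Implicit Types (u v w z p q : 'rV[R]_n) (K : set 'rV[R]_n).

Lemma dotvC u v : dotv u v = dotv v u.
Proof. by apply: eq_bigr => i _; rewrite mulrC. Qed.

Lemma dotvDl u v w : dotv (u + v) w = dotv u w + dotv v w.
Proof. by rewrite /dotv -big_split; apply: eq_bigr => i _; rewrite mxE mulrDl. Qed.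

Lemma dotvZl a u w : dotv (a *: u) w = a * dotv u w.
Proof. by rewrite /dotv mulr_sumr; apply: eq_bigr => i _; rewrite mxE mulrA. Qed.

Lemma dotvNl u w : dotv (- u) w = - dotv u w.
Proof. by rewrite -scaleN1r dotvZl mulN1r. Qed.

Lemma dotvBl u v w : dotv (u - v) w = dotv u w - dotv v w.
Proof. by rewrite dotvDl dotvNl. Qed.

Lemma dotvDr u v w : dotv w (u + v) = dotv w u + dotv w v.
Proof. by rewrite dotvC dotvDl !(dotvC w). Qed.

Lemma dotvZr a u w : dotv w (a *: u) = a * dotv w u.
Proof. by rewrite dotvC dotvZl dotvC. Qed.

Lemma dotvBr u v w : dotv w (u - v) = dotv w u - dotv w v.
Proof. by rewrite dotvC dotvBl !(dotvC w). Qed.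

Lemma dotvv_ge0 u : 0 <= dotv u u.
Proof. by apply: sumr_ge0 => i _; rewrite -expr2 sqr_ge0. Qed.

Lemma enorm_sqr u : enorm u ^+ 2 = dotv u u.
Proof. by rewrite sqr_sqrtr // dotvv_ge0. Qed.

Lemma enormBC u v : enorm (u - v) = enorm (v - u).
Proof. by rewrite /enorm -[v - u]opprB dotvNl dotvC dotvNl opprK. Qed.

Lemma dotvBB u v : dotv (u - v) (u - v) = dotv u u - 2 * dotv u v + dotv v v.
Proof. by rewrite dotvBl !dotvBr (dotvC v u); ring. Qed.

Lemma young_dotv (c rho : R) u v : 0 < rho ->
  c * dotv u v <= c ^+ 2 * rho / 2 * enorm u ^+ 2 + (2 * rho)^-1 * enorm v ^+ 2.
Proof.
move=> rho_gt0; rewrite !enorm_sqr -subr_ge0.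
have := dotvv_ge0 ((rho * c) *: u - v).
rewrite dotvBB !dotvZl !dotvZr => sq_ge0.
have -> : c ^+ 2 * rho / 2 * dotv u u + (2 * rho)^-1 * dotv v v - c * dotv u v =
    (2 * rho)^-1 * (rho * c * (rho * c * dotv u u) - 2 * (rho * c * dotv u v)
                    + dotv v v).
  by field; rewrite gt_eqF.
by rewrite mulr_ge0 // invr_ge0; lra.
Qed.

Lemma is_proj_segment_ge0 K z p q (l : R) : convex_setK K -> is_proj K z p -> K q ->
  0 < l <= 1 -> 0 <= l ^+ 2 * dotv (q - p) (q - p) - 2 * l * dotv (z - p) (q - p).
Proof.
move=> convK [Kp p_min] Kq /andP[l_gt0 l_le1].
have Kpq : K (l *: q + (1 - l) *: p) by apply: convK => //; rewrite ltW.
have := p_min _ Kpq.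
have -> : z - (l *: q + (1 - l) *: p) = (z - p) - l *: (q - p).
  by apply/rowP => i; rewrite !mxE; ring.
rewrite /enorm ler_sqrt ?dotvv_ge0 // (dotvBB (z - p)) !dotvZl !dotvZr.
lra.
Qed.

Lemma is_proj_obtuse K z p q : convex_setK K -> is_proj K z p -> K q ->
  dotv (z - p) (q - p) <= 0.
Proof.
move=> convK pz Kq; apply: quadratic_ge0_le0 (dotvv_ge0 _) _ => l.
exact: is_proj_segment_ge0 convK pz Kq.
Qed.

Lemma is_proj_three_point K z v p q (eta : R) : convex_setK K ->
  is_proj K (z - eta *: v) p -> K q ->
  eta * dotv v (p - q) <=
    (enorm (z - q) ^+ 2 - enorm (z - p) ^+ 2 - enorm (p - q) ^+ 2) / 2.
Proof.
move=> convK pz Kq; have := is_proj_obtuse convK pz Kq.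
have -> : z - q = (z - p) - (q - p) by apply/rowP => i; rewrite !mxE; ring.
have -> : z - eta *: v - p = (z - p) - eta *: v by apply/rowP => i; rewrite !mxE; ring.
rewrite dotvBl dotvZl (enormBC p q) !enorm_sqr (dotvBB (z - p)) !dotvBr; lra.
Qed.

End EuclideanGeometry.

Theorem lemma16 (R : realType) (n : nat) (K : set 'rV[R]_n) (f : 'rV[R]_n -> R)
  (xstar x0 : 'rV[R]_n) (r_eps : R) (Gx Gy : nat -> R) (x y m g : nat -> 'rV[R]_n) :
  closed K -> convex_setK K -> convex_fun_on K f ->
  K xstar -> (forall u, K u -> f xstar <= f u) ->
  K x0 -> 0 < r_eps ->
  0 < Gx 0%N -> (forall t, Gx t <= Gy t) -> (forall t, Gy t <= Gx t.+1) ->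
  udog_run K x0 r_eps Gx Gy x y m g ->
  forall (t : nat) (rho : R), 0 < rho ->
  let rb := rbar x0 r_eps x y t in
  let al := alpha x0 r_eps x y t in
  rb * al * dotv (g t) (x t.+1 - xstar) <=
    rb ^+ 2 * al ^+ 2 * rho / 2 * enorm (g t - m t) ^+ 2
    - (2 * rho)^-1 * enorm (x t.+1 - y t) ^+ 2
    + ((2 * rho)^-1 - Num.sqrt (Gx t) / 2)
        * (enorm (x t.+1 - y t) ^+ 2 + enorm (x t.+1 - y t.+1) ^+ 2)
    + Num.sqrt (Gy t) / 2 * (enorm (y t - xstar) ^+ 2 - enorm (y t.+1 - xstar) ^+ 2).
Proof.
move=> _ convK _ Kxstar _ _ _ Gx0_gt0 Gx_le_Gy Gy_le_Gx [_ [_ steps]] t rho rho_gt0 /=.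
have [x_step y_step] := steps t.
set rb := rbar x0 r_eps x y t in x_step y_step *.
set al := alpha x0 r_eps x y t in x_step y_step *.
have Gx_gt0 k : 0 < Gx k.
  elim: k => // k IHk; exact: lt_le_trans IHk (le_trans (Gx_le_Gy k) (Gy_le_Gx k)).
have Gy_gt0 : 0 < Gy t by exact: lt_le_trans (Gx_gt0 t) (Gx_le_Gy t).
have sGx_le_sGy : Num.sqrt (Gx t) <= Num.sqrt (Gy t) by exact: ler_wsqrtr.
have step_scale G : 0 < G -> Num.sqrt G * (al * (rb / Num.sqrt G)) = rb * al.
  by move=> G_gt0; field; rewrite gt_eqF // sqrtr_gt0.
have x_bound := ler_wpM2l (sqrtr_ge0 (Gx t))
  (is_proj_three_point convK x_step (proj1 y_step)).
have y_bound := ler_wpM2l (sqrtr_ge0 (Gy t)) (is_proj_three_point convK y_step Kxstar).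
rewrite (mulrA _ (al * _)) (step_scale _ (Gx_gt0 t)) (enormBC (y t) (x t.+1)) in x_bound.
rewrite (mulrA _ (al * _)) (step_scale _ Gy_gt0) in y_bound.
have cross_bound := young_dotv (al * rb) (g t - m t) (x t.+1 - y t.+1) rho_gt0.
have split_dotv : dotv (g t) (x t.+1 - xstar) = dotv (g t - m t) (x t.+1 - y t.+1)
    + dotv (m t) (x t.+1 - y t.+1) + dotv (g t) (y t.+1 - xstar).
  rewrite -[x t.+1 - xstar](subrKA (y t.+1)).
  by rewrite (dotvDr (x t.+1 - y t.+1)) (dotvBl (g t)); ring.
have yy_ge0 : 0 <= (Num.sqrt (Gy t) - Num.sqrt (Gx t)) * enorm (y t - y t.+1) ^+ 2.
  by rewrite mulr_ge0 ?subr_ge0 // enorm_sqr dotvv_ge0.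
rewrite split_dotv; clear -x_bound y_bound cross_bound yy_ge0; lra.
Qed.
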